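(* Under the standing assumptions in the context, let $k\ge2$ be a fixed integer and let $v_1,\dots,v_k$ be distinct vertices of $S_{\mathrm{small}}$. Then $$\Pr\bigl(v_1v_2\in E(G)\ \big|\ d_S(v_1)=i_1,\dots,d_S(v_k)=i_k\bigr)=O\!\left(\frac{J^2M}{d(S)^2}\right)$$ for all integers $i_j\le d(v_j)$ ($j\le k$) for which the conditioning event has positive probability, and $\Pr(v_1v_2\in E(G))=O\!\left(\frac{J^2M}{d(S)^2}\right)$.
   Context: All asymptotics are as $n\to\infty$. For each $n$, $\mathbf d=(d(1),\dots,d(n))$ is a sequence of integers with $1\le d(1)\le\dots\le d(n)$ and even sum; $M=\sum_i d(i)$, $\Delta=d(n)$, $d(A)=\sum_{i\in A}d(i)$. $G$ is a uniformly random simple graph on $[n]$ with degree sequence $\mathbf d$. $S\subseteq[n]$ is a given set, $\gamma=d(S)/M$, $d_S(v)$ is the degree of $v$ in $G[S]$. Standing assumptions: there is $\delta=\delta(n)\to0$ with $\delta^{-1}=O(\log\log M)$ and $\Delta^2(\gamma^{-1}\log M)^{12}\le\delta\,d(S)$, and a constant $c>0$ with $\gamma<1-c$. Define $C=\delta^{-1/16}\gamma^{-1}\log M$, $J=\min\{C,\Delta\}$ and $S_{\mathrm{small}}=\{v\in S: d(v)\le C\}$. *)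

From Stdlib Require Import Reals.
From mathcomp Require Import all_boot.
Set Implicit Arguments.
Unset Strict Implicit.
Unset Printing Implicit Defensive.

Open Scope R_scope.

Definition graph (n : nat) := {ffun 'I_n * 'I_n -> bool}.

Definition simpleb n (G : graph n) : bool :=
  [forall u, ~~ G (u, u)] && [forall u, forall v, G (u, v) == G (v, u)].

Definition deg n (G : graph n) (v : 'I_n) : nat := #|[set u | G (v, u)]|.

(* d_S(v): degree of v in G[S] (for v in S) *)
Definition degS n (S : {set 'I_n}) (G : graph n) (v : 'I_n) : nat :=
  #|[set u in S | G (v, u)]|.

Definition graphs n (d : 'I_n -> nat) : {set graph n} :=
  [set G | simpleb G && [forall v, deg G v == d v]].

Definition prob n (d : 'I_n -> nat) (A : {set graph n}) : R :=
  INR #|A :&: graphs d| / INR #|graphs d|.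

Definition cprob n (d : 'I_n -> nat) (A B : {set graph n}) : R :=
  INR #|A :&: B :&: graphs d| / INR #|B :&: graphs d|.

Definition edge_ev n (u v : 'I_n) : {set graph n} := [set G : graph n | G (u, v)].

Definition Mtot n (d : 'I_n -> nat) : nat := (\sum_(i : 'I_n) d i)%N.
Definition dset n (d : 'I_n -> nat) (A : {set 'I_n}) : nat := (\sum_(i in A) d i)%N.
(* Delta = d(n) = max degree (equal under sortedness) *)
Definition Delta n (d : 'I_n -> nat) : nat := (\max_(i : 'I_n) d i)%N.

Definition gam n (d : 'I_n -> nat) (S : {set 'I_n}) : R :=
  INR (dset d S) / INR (Mtot d).

Definition Cpar n (d : 'I_n -> nat) (S : {set 'I_n}) (delta : R) : R :=
  Rpower delta (- (1/16)) * / gam d S * ln (INR (Mtot d)).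

Definition Jpar n (d : 'I_n -> nat) (S : {set 'I_n}) (delta : R) : R :=
  Rmin (Cpar d S delta) (INR (Delta d)).

Definition Ssmall n (d : 'I_n -> nat) (S : {set 'I_n}) (delta : R) : {set 'I_n} :=
  [set v in S | if Rle_dec (INR (d v)) (Cpar d S delta) then true else false].

Definition standing (d : forall n, 'I_n -> nat) (S : forall n, {set 'I_n})
  (delta : nat -> R) (c : R) : Prop :=
  0 < c /\
  (forall n, 0 < delta n) /\
  (forall eps, 0 < eps -> exists N, forall n, (N <= n)%N -> delta n < eps) /\
  (exists K0 N0, forall n, (N0 <= n)%N ->
       / delta n <= K0 * ln (ln (INR (Mtot (d n))))) /\
  (exists N1, forall n, (N1 <= n)%N ->
     (forall i j : 'I_n, (i <= j)%N -> (d n i <= d n j)%N) /\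
     (forall i : 'I_n, (1 <= d n i)%N) /\
     ~~ odd (Mtot (d n)) /\
     graphs (d n) != set0 /\
     (INR (Delta (d n)))^2 * (/ gam (d n) (S n) * ln (INR (Mtot (d n))))^12
        <= delta n * INR (dset (d n) (S n)) /\
     gam (d n) (S n) < 1 - c).

From Pilot Require Import Defs.
From Stdlib Require Import Reals Lra.
From mathcomp Require Import all_boot fingroup perm zify.
Set Implicit Arguments.
Unset Strict Implicit.
Unset Printing Implicit Defensive.

(* Write a = v1, b = v2 and F = {v1, ..., vk}.  A switching takes a graph containing ab
   together with arcs xu and yw (x, y in S; x, u, y, w outside F; ax, by, uw non-edges)
   and replaces ab, xu, yw by ax, by, uw.  It toggles the edges of the alternating
   six-cycle a b y w u x, hence preserves every degree, and it preserves d_S(z) for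
   z in F because a trades b for x and b trades a for y, all four in S.  Every graph
   containing ab admits at least (d(S) - L)^2 switchings, where L = O((k + Delta) Delta)
   bounds the arcs excluded by the side conditions, and every graph avoiding ab is the
   image of at most d(a) d(b) M of them.  Double counting and L <= d(S)/2, which the
   standing assumptions give for large n, bound the conditional probability of ab by
   4 d(a) d(b) M / d(S)^2 <= 4 J^2 M / d(S)^2. *)

Section DoubleCounting.
Local Open Scope nat_scope.

Lemma sum_card_exchange (T U : finType) (A : {set T}) (R : T -> {set U}) :
  \sum_(x in A) #|R x| = \sum_y #|[set x in A | y \in R x]|.
Proof.
under eq_bigr do rewrite -sum1_card big_mkcond.
rewrite (exchange_big_dep predT) //=; apply: eq_bigr => y _.
rewrite -sum1_card big_mkcond [RHS]big_mkcond; apply: eq_bigr => x _.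
by rewrite inE; case: (x \in A).
Qed.

Lemma card_dep_pairs (T U : finType) (A : {set T}) (B : T -> {set U}) :
  #|[set t : T * U | (t.1 \in A) && (t.2 \in B t.1)]| = \sum_(x in A) #|B x|.
Proof.
rewrite -sum1_card (eq_bigl (fun t => (t.1 \in A) && (t.2 \in B t.1))) => [|t]; last first.
  by rewrite inE.
rewrite -(pair_big_dep (mem A) (fun x y => y \in B x) (fun _ _ => 1)) /=.
by apply: eq_bigr => x _; rewrite sum1_card.
Qed.

Lemma card_dep_pairs_ge (T U : finType) (A : {set T}) (B : T -> {set U}) m1 m2 :
  m1 <= #|A| -> (forall x, x \in A -> m2 <= #|B x|) ->
  m1 * m2 <= #|[set t : T * U | (t.1 \in A) && (t.2 \in B t.1)]|.
Proof.
move=> hA hB; rewrite card_dep_pairs; apply: leq_trans (leq_mul hA (leqnn m2)) _.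
by rewrite -sum_nat_const; apply: leq_sum.
Qed.

Lemma switching_double_count (T U : finType) (X Y : {set T}) (fwd bwd : T -> {set U})
    (f : U -> T -> T) (m D : nat) :
  (forall t, injective (f t)) ->
  (forall G t, G \in X -> t \in fwd G -> f t G \in Y /\ t \in bwd (f t G)) ->
  (forall G, G \in X -> m <= #|fwd G|) ->
  (forall G, G \in Y -> #|bwd G| <= D) ->
  #|X| * m <= #|Y| * D.
Proof.
move=> f_inj f_fwd fwd_ge bwd_le.
apply: (@leq_trans (\sum_(G in X) #|fwd G|)).
  by rewrite -sum_nat_const; apply: leq_sum.
apply: (@leq_trans (\sum_(G in Y) #|bwd G|)); last first.
  by rewrite -sum_nat_const; apply: leq_sum.
rewrite !sum_card_exchange; apply: leq_sum => t _.
rewrite -(card_imset _ (f_inj t)); apply: subset_leq_card.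
apply/subsetP => _ /imsetP[G + ->]; rewrite inE => /andP[GX tG].
by have [fY tb] := f_fwd G t GX tG; rewrite inE fY tb.
Qed.

End DoubleCounting.

Section CycleSwitch.
Variables (n : nat) (c : seq 'I_n).

Definition cycle_adj (p q : 'I_n) := (p \in c) && ((q == next c p) || (q == prev c p)).

Definition cycle_switch (G : graph n) : graph n := [ffun e => cycle_adj e.1 e.2 (+) G e].

Lemma cycle_switchK : involutive cycle_switch.
Proof. by move=> G; apply/ffunP => e; rewrite !ffunE addbA addbb. Qed.

Lemma cycle_switch_inj : injective cycle_switch.
Proof. exact: inv_inj cycle_switchK. Qed.

Lemma cycle_switch_next G z : z \in c -> cycle_switch G (z, next c z) = ~~ G (z, next c z).
Proof. by move=> zc; rewrite ffunE /cycle_adj /= zc eqxx. Qed.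

Lemma next_prev_notin z : z \notin c -> next c z = z /\ prev c z = z.
Proof. by move=> zc; rewrite next_nth prev_nth (negbTE zc). Qed.

Hypothesis Uc : uniq c.

Lemma cycle_adjC p q : cycle_adj q p = cycle_adj p q.
Proof.
wlog suff: p q / cycle_adj p q -> cycle_adj q p.
  by move=> h; apply/idP/idP; apply: h.
case/andP=> pc /orP[/eqP-> | /eqP->]; rewrite /cycle_adj ?mem_next ?mem_prev pc /=.
  by rewrite prev_next // eqxx orbT.
by rewrite next_prev // eqxx.
Qed.

Variable G : graph n.
Hypotheses (Gsym : forall p q, G (p, q) = G (q, p)) (Gloop : forall p, G (p, p) = false).
Hypothesis Galt : forall z, z \in c -> G (z, next c z) != G (z, prev c z).

Lemma cycle_switch_row z0 z :
  cycle_switch G (z0, z) = G (z0, tperm (next c z0) (prev c z0) z).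
Proof.
rewrite ffunE /cycle_adj /=; have [z0c | z0c] := boolP (z0 \in c); last first.
  by have [-> ->] := next_prev_notin z0c; rewrite tperm1 perm1.
have := Galt z0c; case: tpermP => [-> | -> | /eqP/negPf-> /eqP/negPf->] //=;
  by rewrite eqxx ?orbT; case: (G (z0, next c z0)); case: (G (z0, prev c z0)).
Qed.

Lemma card_cycle_switch_row (A : {set 'I_n}) z0 :
  (next c z0 \in A) = (prev c z0 \in A) ->
  #|[set z in A | cycle_switch G (z0, z)]| = #|[set z in A | G (z0, z)]|.
Proof.
move=> hA; set s := tperm (next c z0) (prev c z0).
rewrite -[RHS](card_preimset _ (@perm_inj _ s)); apply: eq_card => z.
rewrite !inE cycle_switch_row; congr (_ && _).
by rewrite /s; case: tpermP => // ->.
Qed.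

Lemma cycle_adj_loop p : cycle_adj p p = false.
Proof.
apply/negbTE/negP => /andP[pc /orP[] /eqP ep].
  have eprev : prev c p = p by rewrite [in LHS]ep prev_next.
  by have := Galt pc; rewrite -ep eprev eqxx.
have enext : next c p = p by rewrite [in LHS]ep next_prev.
by have := Galt pc; rewrite -ep enext eqxx.
Qed.

Lemma cycle_switch_sym p q : cycle_switch G (p, q) = cycle_switch G (q, p).
Proof. by rewrite !ffunE /= cycle_adjC Gsym. Qed.

Lemma cycle_switch_simple : simpleb (cycle_switch G).
Proof.
apply/andP; split; apply/forallP => p; first by rewrite ffunE /= cycle_adj_loop Gloop.
by apply/forallP => q; rewrite cycle_switch_sym.
Qed.

Lemma cycle_switch_deg z0 : deg (cycle_switch G) z0 = deg G z0.
Proof.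
transitivity #|[set z in [set: 'I_n] | cycle_switch G (z0, z)]|.
  by apply: eq_card => z; rewrite !inE.
by rewrite card_cycle_switch_row ?in_setT //; apply: eq_card => z; rewrite !inE.
Qed.

Lemma cycle_switch_degS (S : {set 'I_n}) z0 :
  (next c z0 \in S) = (prev c z0 \in S) -> degS S (cycle_switch G) z0 = degS S G z0.
Proof. exact: card_cycle_switch_row. Qed.

End CycleSwitch.

Lemma uniq_cat_separated (T : eqType) (P : pred T) (s1 s2 : seq T) :
  uniq s1 -> uniq s2 -> all P s1 -> all (predC P) s2 -> uniq (s1 ++ s2).
Proof.
move=> u1 u2 /allP P1 /allP P2; rewrite cat_uniq u1 u2 andbT.
by apply/hasPn => z /P2 /= Pz; apply: contra Pz => /P1.
Qed.

Section SixCycle.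
Variables (n : nat) (a b x u y w : 'I_n).
Let c := [:: a; b; y; w; u; x].
Hypothesis Uc : uniq c.

Let next_a : next c a = b. Proof. by rewrite /= eqxx. Qed.
Let next_b : next c b = y. Proof. by rewrite -(next_rot 1 Uc) /= eqxx. Qed.
Let next_y : next c y = w. Proof. by rewrite -(next_rot 2 Uc) /= eqxx. Qed.
Let next_w : next c w = u. Proof. by rewrite -(next_rot 3 Uc) /= eqxx. Qed.
Let next_u : next c u = x. Proof. by rewrite -(next_rot 4 Uc) /= eqxx. Qed.
Let next_x : next c x = a. Proof. by rewrite -(next_rot 5 Uc) /= eqxx. Qed.

Let prev_a : prev c a = x. Proof. by rewrite -[in LHS]next_x prev_next. Qed.
Let prev_b : prev c b = a. Proof. by rewrite -[in LHS]next_a prev_next. Qed.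
Let prev_y : prev c y = b. Proof. by rewrite -[in LHS]next_b prev_next. Qed.
Let prev_w : prev c w = y. Proof. by rewrite -[in LHS]next_y prev_next. Qed.
Let prev_u : prev c u = w. Proof. by rewrite -[in LHS]next_w prev_next. Qed.
Let prev_x : prev c x = u. Proof. by rewrite -[in LHS]next_u prev_next. Qed.

Lemma six_cycle_around_ab : [/\ next c a = b, prev c a = x, next c b = y & prev c b = a].
Proof. by []. Qed.

Variable G : graph n.
Hypothesis Gsym : forall p q, G (p, q) = G (q, p).
Hypotheses (Eab : G (a, b)) (Exu : G (x, u)) (Eyw : G (y, w))
  (Nax : ~~ G (a, x)) (Nby : ~~ G (b, y)) (Nuw : ~~ G (u, w)).

Lemma six_cycle_alternating z : z \in c -> G (z, next c z) != G (z, prev c z).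
Proof.
rewrite {1}/c !inE => /or3P[| |/or3P[| |/orP[]]] /eqP->;
  rewrite ?(next_a, next_b, next_y, next_w, next_u, next_x);
  rewrite ?(prev_a, prev_b, prev_y, prev_w, prev_u, prev_x);
  by rewrite ?(Gsym b a, Gsym y b, Gsym w u, Gsym w y, Gsym u x, Gsym x a)
    ?(Eab, Exu, Eyw, negbTE Nax, negbTE Nby, negbTE Nuw).
Qed.

Lemma six_cycle_switch_edges :
  [/\ cycle_switch c G (a, b) = false, cycle_switch c G (a, x),
      cycle_switch c G (b, y) & cycle_switch c G (u, w)].
Proof.
have flip z : z \in c -> cycle_switch c G (z, next c z) = ~~ G (z, next c z).
  exact: cycle_switch_next.
rewrite (cycle_switch_sym Uc Gsym a x) (cycle_switch_sym Uc Gsym u w).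
have := flip a; have := flip x; have := flip b; have := flip w.
rewrite next_a next_x next_b next_w /c !inE !eqxx ?orbT => -> // -> // -> // -> //.
by rewrite (Gsym x a) (Gsym w u) Eab (negbTE Nax) (negbTE Nby) (negbTE Nuw).
Qed.

End SixCycle.

Definition nbhd n (G : graph n) (v : 'I_n) : {set 'I_n} := [set z | G (v, z)].

Definition arcs_avoiding n (G : graph n) (S C1 C2 : {set 'I_n}) : {set 'I_n * 'I_n} :=
  [set p | [&& G p, p.1 \in S, p.1 \notin C1 & p.2 \notin C2]].

Section ArcCounts.
Local Open Scope nat_scope.
Variables (n : nat) (d : 'I_n -> nat) (G : graph n).
Hypothesis Gd : G \in graphs d.

Lemma graphs_sym p q : G (p, q) = G (q, p).
Proof. by move: Gd; rewrite inE => /andP[/andP[_ /forallP/(_ p)/forallP/(_ q)/eqP]]. Qed.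

Lemma graphs_loopless p : G (p, p) = false.
Proof. by move: Gd; rewrite inE => /andP[/andP[/forallP/(_ p)/negbTE]]. Qed.

Lemma graphs_deg v : deg G v = d v.
Proof. by move: Gd; rewrite inE => /andP[_ /forallP/(_ v)/eqP]. Qed.

Lemma card_nbhd v : #|nbhd G v| = d v.
Proof. exact: graphs_deg. Qed.

Lemma card_nbhd_le v : #|nbhd G v| <= Defs.Delta d.
Proof. by rewrite card_nbhd; apply: leq_bigmax. Qed.

Lemma card_arcs_from (C : {set 'I_n}) : #|[set p | G p && (p.1 \in C)]| = \sum_(i in C) d i.
Proof.
rewrite -(eq_bigr _ (fun i _ => card_nbhd i)) -card_dep_pairs.
by apply: eq_card => -[i j]; rewrite !inE andbC.
Qed.

Lemma card_arcs : #|[set p | G p]| = Mtot d.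
Proof.
transitivity #|[set p | G p && (p.1 \in [set: 'I_n])]|.
  by apply: eq_card => p; rewrite !inE andbT.
by rewrite card_arcs_from; apply: eq_bigl => i; rewrite in_setT.
Qed.

Lemma card_arcs_from_le (C : {set 'I_n}) :
  #|[set p | G p && (p.1 \in C)]| <= #|C| * Defs.Delta d.
Proof.
rewrite card_arcs_from -sum_nat_const; apply: leq_sum => i _.
by rewrite -card_nbhd card_nbhd_le.
Qed.

Lemma card_arcs_to_le (C : {set 'I_n}) :
  #|[set p | G p && (p.2 \in C)]| <= #|C| * Defs.Delta d.
Proof.
rewrite -(card_preimset _ (can_inj swap_pairK)); apply: leq_trans (card_arcs_from_le C).
by apply/subset_leq_card/subsetP => -[i j]; rewrite !inE graphs_sym.
Qed.

Lemma card_arcs_avoiding (S C1 C2 : {set 'I_n}) :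
  dset d S - (#|C1| + #|C2|) * Defs.Delta d <= #|arcs_avoiding G S C1 C2|.
Proof.
set from1 := [set p | G p && (p.1 \in C1)]; set to2 := [set p | G p && (p.2 \in C2)].
have sub : [set p | G p && (p.1 \in S)] :\: (from1 :|: to2) \subset arcs_avoiding G S C1 C2.
  apply/subsetP => -[i j]; rewrite !inE /=.
  by case: (G (i, j)); case: (i \in S); case: (i \in C1); case: (j \in C2).
apply: leq_trans (subset_leq_card sub); rewrite cardsD card_arcs_from.
apply: leq_trans (leq_sub2l _ (subset_leq_card (subsetIr _ (from1 :|: to2)))).
apply: leq_sub2l; apply: leq_trans (leq_card_setU _ _) _.
by rewrite mulnDl leq_add ?card_arcs_from_le ?card_arcs_to_le.
Qed.

End ArcCounts.

Lemma ratio_le_of_cross (x y s m : R) :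
  0 <= x -> 0 <= y -> 0 < x + y -> 0 < s -> 0 <= m -> x * s <= y * m ->
  x / (x + y) <= m / s.
Proof.
move=> x0 y0 xy0 s0 m0 cross.
apply: (Rmult_le_reg_r ((x + y) * s)); first exact: Rmult_lt_0_compat.
replace (x / (x + y) * ((x + y) * s)) with (x * s) by (field; lra).
replace (m / s * ((x + y) * s)) with (m * (x + y)) by (field; lra).
nra.
Qed.

Section EdgeSwitching.
Local Open Scope nat_scope.
Variables (n : nat) (d : 'I_n -> nat) (S F : {set 'I_n}) (a b : 'I_n).
Hypotheses (aF : a \in F) (bF : b \in F) (ab : a != b) (aS : a \in S) (bS : b \in S).
Implicit Types (G : graph n) (t : ('I_n * 'I_n) * ('I_n * 'I_n)).

(* At each step of a switching at most |F| + Delta + 2 tails and |F| + Delta + 2 heads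
   are forbidden, and each of them excludes at most Delta arcs. *)
Definition forbidden_bound := (2 * #|F| + 2 * Defs.Delta d + 4) * Defs.Delta d.

Definition first_arcs G := arcs_avoiding G S (F :|: nbhd G a) F.

Definition second_arcs G (p : 'I_n * 'I_n) :=
  arcs_avoiding G S (F :|: nbhd G b :|: [set p.1; p.2]) (F :|: [set p.1; p.2] :|: nbhd G p.2).

Definition switchable G : {set ('I_n * 'I_n) * ('I_n * 'I_n)} :=
  [set t | (t.1 \in first_arcs G) && (t.2 \in second_arcs G t.1)].

Definition unswitchable G : {set ('I_n * 'I_n) * ('I_n * 'I_n)} :=
  [set t | [&& G (a, t.1.1), G (b, t.2.1) & G (t.1.2, t.2.2)]].

(* [t = ((x, u), (y, w))]; toggling the six-cycle a b y w u x deletes ab, yw, ux and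
   adds by, wu, xa. *)
Definition switching t G := cycle_switch [:: a; b; t.2.1; t.2.2; t.1.2; t.1.1] G.

Lemma card_switchable_ge G : G \in graphs d ->
  (dset d S - forbidden_bound) * (dset d S - forbidden_bound) <= #|switchable G|.
Proof.
move=> Gd; have D_le := card_nbhd_le Gd.
apply: (card_dep_pairs_ge (B := second_arcs G)) => [|[i j] _];
  apply: leq_trans _ (card_arcs_avoiding Gd _ _ _);
  apply/leq_sub2l/leq_mul => //.
  apply: leq_trans (leq_add (leq_card_setU _ _) (leqnn _)) _.
  by have := D_le a; lia.
apply: leq_trans (leq_add (leq_card_setU _ _) (leq_card_setU _ _)) _.
apply: leq_trans (leq_add (leq_add (leq_card_setU _ _) (leqnn _))
                          (leq_add (leq_card_setU _ _) (leqnn _))) _.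
rewrite !cards2; have := D_le b; have := D_le j; case: (_ != _) => /=; lia.
Qed.

Lemma card_unswitchable G : G \in graphs d ->
  #|unswitchable G| = d a * d b * Mtot d.
Proof.
move=> Gd; pose regroup t := (t.1.1, t.2.1, (t.1.2, t.2.2)).
have regroupK : involutive regroup by case=> [[? ?] [? ?]].
have -> : unswitchable G = regroup @^-1: setX (setX (nbhd G a) (nbhd G b)) [set p | G p].
  by apply/setP => -[[x u] [y w]]; rewrite !inE /= andbA.
by rewrite card_preimset ?cardsX ?(card_nbhd Gd) ?(card_arcs Gd) //; apply: inv_inj regroupK.
Qed.

Lemma switching_fwd G t : G \in graphs d -> G (a, b) -> t \in switchable G ->
  [/\ switching t G \in graphs d, ~~ switching t G (a, b), t \in unswitchable (switching t G)
    & {in F, forall z, degS S (switching t G) z = degS S G z}].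
Proof.
move=> Gd Eab; case: t => [[x u] [y w]] /[!inE] /= /[!negb_or].
move=> /andP[/and4P[Exu xS /andP[xF Nax] uF]].
move=> /and5P[Eyw yS /and3P[/andP[yF Nby] yx yu] /and3P[wF wx wu] Nuw].
have Gsym := graphs_sym Gd; have Gloop := graphs_loopless Gd.
have yw : y != w by apply: contraTneq Eyw => ->; rewrite Gloop.
have ux : u != x by apply: contraTneq Exu => ->; rewrite Gloop.
set c := [:: a; b; y; w; u; x].
have Uc : uniq c.
  apply: (uniq_cat_separated (P := mem F) (s1 := [:: a; b])); rewrite /= ?inE ?ab //.
  - by rewrite !negb_or yw yu yx wu wx ux.
  - by rewrite aF bF.
  - by rewrite yF wF uF xF.
have Galt := six_cycle_alternating Uc Gsym Eab Exu Eyw Nax Nby Nuw.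
have [Eab' Eax' Eby' Euw'] := six_cycle_switch_edges Uc Gsym Eab Nax Nby Nuw.
rewrite /switching /=; split.
- rewrite cycle_switch_simple //=; apply/forallP => v.
  by rewrite cycle_switch_deg // (graphs_deg Gd).
- by rewrite Eab'.
- by rewrite Eax' Eby' Euw'.
move=> z zF; apply: cycle_switch_degS => //.
have [na pa nb pb] := six_cycle_around_ab Uc.
have [za | za] := eqVneq z a; first by rewrite za na pa bS xS.
have [zb | zb] := eqVneq z b; first by rewrite zb nb pb yS aS.
have zc : z \notin c.
  rewrite !inE (negbTE za) (negbTE zb) /= !negb_or.
  by apply/and4P; split; apply: contraTneq zF => ->.
by have [-> ->] := next_prev_notin zc.
Qed.

Variable B : {set graph n}.
Hypothesis B_degS : forall G G', G \in B ->
  {in F, forall z, degS S G' z = degS S G z} -> G' \in B.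

Lemma edge_switching_count :
  #|B :&: graphs d :&: edge_ev a b| *
    ((dset d S - forbidden_bound) * (dset d S - forbidden_bound))
  <= #|B :&: graphs d :\: edge_ev a b| * (d a * d b * Mtot d).
Proof.
apply: (switching_double_count (fwd := switchable) (bwd := unswitchable) (f := switching))
  => [t | G t | G | G].
- exact: cycle_switch_inj.
- move=> /setIP[/setIP[GB Gd]]; rewrite inE => Eab.
  move=> /(switching_fwd Gd Eab)[sGd Nab tsG degS_eq].
  by split=> //; rewrite in_setD in_setI sGd inE Nab (B_degS GB degS_eq).
- by move=> /setIP[/setIP[_ Gd] _]; apply: card_switchable_ge.
- by move=> /setDP[/setIP[_ Gd] _]; rewrite card_unswitchable.
Qed.

Local Open Scope R_scope.

Lemma edge_ratio_le (J : R) :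
  (0 < dset d S)%N -> (2 * forbidden_bound <= dset d S)%N -> (0 < #|B :&: graphs d|)%N ->
  INR (d a) <= J -> INR (d b) <= J ->
  INR #|B :&: graphs d :&: edge_ev a b| / INR #|B :&: graphs d|
    <= 4 * J ^ 2 * INR (Mtot d) / INR (dset d S) ^ 2.
Proof.
move=> dS_pos half pos da_J db_J.
set X := #|B :&: graphs d :&: edge_ev a b|; set Y := #|B :&: graphs d :\: edge_ev a b|.
have XY : #|B :&: graphs d| = (X + Y)%N by rewrite cardsID.
have dS_le : (dset d S * dset d S <=
    4 * ((dset d S - forbidden_bound) * (dset d S - forbidden_bound)))%N.
  have h : (dset d S <= 2 * (dset d S - forbidden_bound))%N by lia.
  by rewrite -[4%N]/(2 * 2)%N mulnACA leq_mul.
have cross : (X * (dset d S * dset d S) <= 4 * (Y * (d a * d b * Mtot d)))%N.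
  apply: leq_trans (leq_mul (leqnn X) dS_le) _.
  by rewrite mulnCA leq_mul2l edge_switching_count orbT.
have XY0 : 0 < INR X + INR Y.
  by rewrite -plus_INR; apply/lt_0_INR/ltP; move: pos; rewrite XY.
move: cross => /leP/le_INR; rewrite !mult_INR [INR 4]/= => cross.
have dS0 : 0 < INR (dset d S) by apply/lt_0_INR/ltP.
have da0 := pos_INR (d a); have db0 := pos_INR (d b).
have Y0 := pos_INR Y; have M0 := pos_INR (Mtot d).
have dadb : INR (d a) * INR (d b) <= J ^ 2 by nra.
have YM : INR Y * (INR (d a) * INR (d b) * INR (Mtot d)) <= INR Y * (J ^ 2 * INR (Mtot d)).
  by apply/Rmult_le_compat_l/Rmult_le_compat_r.
rewrite XY plus_INR; apply: ratio_le_of_cross => //; try nra; exact: pos_INR.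
Qed.

End EdgeSwitching.

Section DegreeSums.
Variables (n : nat) (d : 'I_n -> nat).

Lemma leq_dset (S : {set 'I_n}) a : a \in S -> (d a <= dset d S)%N.
Proof. by move=> aS; rewrite /dset (bigD1 a) ?leq_addr. Qed.

Lemma dset_le_Mtot (S : {set 'I_n}) : (dset d S <= Mtot d)%N.
Proof. by rewrite /Mtot [X in (_ <= X)%N](bigID (mem S)) leq_addr. Qed.

Lemma Ssmall_le_Jpar (S : {set 'I_n}) del v :
  v \in Ssmall d S del -> v \in S /\ INR (d v) <= Jpar d S del.
Proof.
rewrite inE => /andP[vS]; case: Rle_dec => // dC _; split=> //.
by apply: Rmin_glb => //; apply/le_INR/leP/leq_bigmax.
Qed.

End DegreeSums.

Lemma half_le_inv_ratio_ln (s m : R) : 0 < s -> s <= m -> 2 <= m -> / 2 <= / (s / m) * ln m.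
Proof.
move=> s0 sm m2; rewrite Rinv_div.
have ln_m : / 2 < ln m.
  have := ln_lt_2; case: (Rle_lt_or_eq_dec _ _ m2) => [/(ln_increasing 2)|<-]; lra.
have ms : m / s * s = m by field; lra.
nra.
Qed.

Lemma sq_le_of_density (D dS K : nat) (del z : R) : (0 < K)%N -> / 2 <= z ->
  INR D ^ 2 * z ^ 12 <= del * INR dS -> del < / (4096 * INR K) -> (K * (D * D) <= dS)%N.
Proof.
move=> /ltP/lt_0_INR K0 z2 dens del_small; apply/leP/INR_le.
rewrite !mult_INR.
have z12 : / 4096 <= z ^ 12.
  replace (/ 4096) with ((/ 2) ^ 12) by field.
  by apply: pow_incr; lra.
have DD := Rle_0_sqr (INR D); rewrite /Rsqr in DD.
have dS0 := pos_INR dS.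
have del_K : del * (4096 * INR K) < 1.
  have K4 : 0 < 4096 * INR K by lra.
  by have := Rmult_lt_compat_r _ _ _ K4 del_small; rewrite Rinv_l //; lra.
have s1 : INR D * INR D / 4096 <= del * INR dS by nra.
have s2 : del * INR dS * (4096 * INR K) <= INR dS by nra.
nra.
Qed.

Lemma forbidden_bound_half n (d : 'I_n -> nat) (S F : {set 'I_n}) (k : nat) (del : R) a :
  a \in S -> (0 < d a)%N -> ~~ odd (Mtot d) -> (#|F| <= k)%N ->
  INR (Defs.Delta d) ^ 2 * (/ gam d S * ln (INR (Mtot d))) ^ 12 <= del * INR (dset d S) ->
  del < / (4096 * INR (2 * (2 * k + 6))) ->
  (2 * forbidden_bound d F <= dset d S)%N.
Proof.
move=> aS da0 M_even Fk dens del_small.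
have dS0 : (0 < dset d S)%N := leq_trans da0 (leq_dset d aS).
have M2 : (2 <= Mtot d)%N.
  by move: M_even (leq_trans dS0 (dset_le_Mtot d S)); case: (Mtot d) => [|[|m]].
have D0 : (0 < Defs.Delta d)%N := leq_trans da0 (leq_bigmax a).
have z2 : / 2 <= / gam d S * ln (INR (Mtot d)).
  apply: half_le_inv_ratio_ln;
    [apply/lt_0_INR/ltP | apply/le_INR/leP/dset_le_Mtot | apply/(le_INR 2)/leP] => //.
have := sq_le_of_density _ z2 dens del_small.
rewrite /forbidden_bound; nia.
Qed.

Theorem lemma3p5 (k : nat) (d : forall n, 'I_n -> nat) (S : forall n, {set 'I_n})
  (delta : nat -> R) (c : R) :
  standing d S delta c ->
  exists K : R, exists N : nat, forall n : nat, (N <= n)%N ->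
    forall v : 'I_k.+2 -> 'I_n, injective v ->
    (forall j, v j \in Ssmall (d n) (S n) (delta n)) ->
    let bound := K * (Jpar (d n) (S n) (delta n))^2 * INR (Mtot (d n))
                   / (INR (dset (d n) (S n)))^2 in
    (forall i : 'I_k.+2 -> nat,
       (forall j, (i j <= d n (v j))%N) ->
       let B := [set G : graph n | [forall j, degS (S n) G (v j) == i j]] in
       (0 < #|B :&: graphs (d n)|)%N ->
       cprob (d n) (edge_ev (v (inord 0)) (v (inord 1))) B <= bound) /\
    prob (d n) (edge_ev (v (inord 0)) (v (inord 1))) <= bound.
Proof.
move=> [_ [_ [delta_small [_ [N1 regular]]]]].
have [|N2 delta_lt] := delta_small (/ (4096 * INR (2 * (2 * k.+2 + 6)))).
  by apply/Rinv_0_lt_compat/Rmult_lt_0_compat; [lra | apply/lt_0_INR/ltP].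
exists 4, (maxn N1 N2) => n; rewrite geq_max => /andP[].
move=> /regular[_ [d_pos [M_even [nonempty [dens _]]]]] /delta_lt del_small.
move=> v v_inj v_small bound.
pose F := [set v j | j in 'I_k.+2].
have vF j : v j \in F by apply: imset_f.
have [aS aJ] := Ssmall_le_Jpar (v_small (inord 0)).
have [bS bJ] := Ssmall_le_Jpar (v_small (inord 1)).
have ab : v (inord 0) != v (inord 1) by rewrite (inj_eq v_inj) -val_eqE /= !inordK.
have half : (2 * forbidden_bound (d n) F <= dset (d n) (S n))%N.
  apply: (forbidden_bound_half aS (d_pos _) M_even _ dens del_small).
  by apply: leq_trans (leq_imset_card _ _) _; rewrite card_ord.
have dS_pos := leq_trans (d_pos _) (leq_dset (d n) aS).
have ratio := edge_ratio_le (vF _) (vF _) ab aS bS.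
split=> [i _ B pos | ]; rewrite /bound.
- rewrite /cprob -setIA setIC; apply: ratio => // G G' GB degS_eq.
  by move: GB; rewrite !inE => /forallP eq_i; apply/forallP => j; rewrite degS_eq.
- rewrite /prob setIC -[graphs _]setTI; apply: ratio => // [G G' _ _ | ].
    exact: in_setT.
  by rewrite setTI card_gt0.
Qed.
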